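(* Let $\alpha,\beta<1$ be real numbers. Let $A,B\subset\mathbb{N}$ be such that $A(X)\ge C\frac{\sqrt{X}}{(\log X)^{\alpha}}$ and $B(X)\ge C\frac{\sqrt{X}}{(\log X)^{\beta}}$ for some constant $C>0$ and all sufficiently large $X$. Then there is a constant $C'>0$ such that for all sufficiently large $X$, $$\sum_{\substack{a\in A,\ b\in B\\ ab\le X}}1\ge C'\sqrt{X}(\log X)^{1-\alpha-\beta}.$$
   Context: $\mathbb{N}$ is the set of positive integers; for $S\subset\mathbb{N}_0$, $S(X)=|S\cap[1,X]|$. *)

From Stdlib Require Import Reals Lra Lia List.
Open Scope R_scope.

(* floor of a nonnegative real, as a natural number (0 for negative X) *)
Definition nfloor (X : R) : nat := Z.to_nat (Int_part X).

(* S(X) = |S ∩ [1, X]|, S given by its (boolean) indicator on nat *)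
Definition count_upto (S : nat -> bool) (X : R) : nat :=
  length (filter S (seq 1 (nfloor X))).

Definition pair_count (A B : nat -> bool) (X : R) : nat :=
  length (filter (fun p : nat * nat =>
                    (A (fst p) && B (snd p) && Nat.leb (fst p * snd p) (nfloor X))%bool)
                 (list_prod (seq 1 (nfloor X)) (seq 1 (nfloor X)))).

(* Let N = ⌊X⌋, L = log N, T = ⌊√N⌋ and s = ⌊√T⌋ ≈ N^(1/4). Keeping only the pairs with
   a ≤ T, the count is at least the sum of B(N/a) over a ∈ A, a ≤ T. There log(N/a) ≍ L, so
   B(N/a) ≥ h(a) := H/√a with H ≍ √N L^(-β). Partial summation turns the sum of h(a) over
   a ∈ A, a ≤ T into A(T) h(T) + Σ_{a<T} A(a) (h(a) - h(a+1)). For s < a < T we have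
   A(a) ≫ √a L^(-α) and h(a) - h(a+1) ≫ H a^(-3/2), so each term is ≫ H L^(-α) / a, and
   Σ_{s<a<T} 1/a ≥ log(T/(s+1)) ≫ L. Hence the count is ≫ √N L^(1-α-β). *)

From Stdlib Require Import Reals Lra Lia List.
Open Scope R_scope.

Lemma ln_le x y : 0 < x -> x <= y -> ln x <= ln y.
Proof.
  intros Hx [Hlt|<-]; [left; apply ln_increasing; assumption | right; reflexivity].
Qed.

Lemma Rpower_pos x y : 0 < Rpower x y.
Proof. apply exp_pos. Qed.

Definition count_to (P : nat -> bool) (n : nat) : nat := length (filter P (seq 1 n)).

Fixpoint sum_to (f : nat -> R) (n : nat) : R :=
  match n with O => 0 | S k => sum_to f k + f (S k) end.

Lemma sum_to_range_le f g m n : (m <= n)%nat ->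
  (forall a, (m < a <= n)%nat -> f a <= g a) ->
  sum_to f n - sum_to f m <= sum_to g n - sum_to g m.
Proof.
  induction 1 as [|n Hmn IH]; intros Hfg; simpl; [lra|].
  assert (sum_to f n - sum_to f m <= sum_to g n - sum_to g m)
    by (apply IH; intros; apply Hfg; lia).
  assert (f (S n) <= g (S n)) by (apply Hfg; lia).
  lra.
Qed.

Lemma sum_to_le f g n :
  (forall a, (1 <= a <= n)%nat -> f a <= g a) -> sum_to f n <= sum_to g n.
Proof.
  intros Hfg.
  assert (H : sum_to f n - 0 <= sum_to g n - 0)
    by (apply (sum_to_range_le f g 0 n); [lia | intros; apply Hfg; lia]).
  lra.
Qed.

Lemma sum_to_le_of_nonneg_tail f m n : (m <= n)%nat ->
  (forall a, (m < a <= n)%nat -> 0 <= f a) -> sum_to f m <= sum_to f n.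
Proof.
  induction 1 as [|n Hmn IH]; intros Hf; simpl; [lra|].
  assert (sum_to f m <= sum_to f n) by (apply IH; intros; apply Hf; lia).
  assert (0 <= f (S n)) by (apply Hf; lia).
  lra.
Qed.

Lemma sum_to_scal k f n : sum_to (fun a => k * f a) n = k * sum_to f n.
Proof. induction n as [|n IH]; simpl; [ring|]. rewrite IH. ring. Qed.

Lemma INR_list_sum_seq (g : nat -> nat) n :
  INR (list_sum (map g (seq 1 n))) = sum_to (fun a => INR (g a)) n.
Proof.
  induction n as [|n IH]; [reflexivity|].
  rewrite seq_S, map_app, list_sum_app, plus_INR, IH. simpl. rewrite Nat.add_0_r. reflexivity.
Qed.

Lemma count_to_S P n :
  count_to P (S n) = (count_to P n + (if P (S n) then 1 else 0))%nat.
Proof.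
  unfold count_to. rewrite seq_S, filter_app, length_app. simpl.
  destruct (P (S n)); reflexivity.
Qed.

Lemma sum_indicator_by_parts (P : nat -> bool) (h : nat -> R) n :
  sum_to (fun a => if P a then h a else 0) (S n) =
  INR (count_to P (S n)) * h (S n)
  + sum_to (fun a => INR (count_to P a) * (h a - h (S a))) n.
Proof.
  induction n as [|n IH].
  - simpl. unfold count_to. simpl. destruct (P 1%nat); simpl; ring.
  - change (sum_to (fun a => if P a then h a else 0) (S (S n)))
      with (sum_to (fun a => if P a then h a else 0) (S n)
            + (if P (S (S n)) then h (S (S n)) else 0)).
    rewrite IH, (count_to_S P (S n)), plus_INR. simpl.
    destruct (P (S (S n))); simpl; ring.
Qed.

Lemma sum_indicator_ge_tail (P : nat -> bool) (h : nat -> R) m n :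
  (m <= n)%nat -> (forall a, (1 <= a)%nat -> h (S a) <= h a) -> 0 <= h (S n) ->
  sum_to (fun a => INR (count_to P a) * (h a - h (S a))) n
  - sum_to (fun a => INR (count_to P a) * (h a - h (S a))) m
  <= sum_to (fun a => if P a then h a else 0) (S n).
Proof.
  intros Hmn Hdecr Hpos. rewrite sum_indicator_by_parts.
  assert (0 <= INR (count_to P (S n)) * h (S n)) by (apply Rmult_le_pos; [apply pos_INR | exact Hpos]).
  assert (0 <= sum_to (fun a => INR (count_to P a) * (h a - h (S a))) m).
  { apply (sum_to_le_of_nonneg_tail _ 0 m); [lia|]. intros a Ha.
    apply Rmult_le_pos; [apply pos_INR|]. pose proof (Hdecr a ltac:(lia)). lra. }
  lra.
Qed.

Lemma ln_succ_sub_ln_le_inv x : 0 < x -> ln (x + 1) - ln x <= / x.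
Proof.
  intros Hx.
  replace (x + 1) with (x * (1 + / x)) by (field; lra).
  assert (Hinv : 0 < / x) by (apply Rinv_0_lt_compat; exact Hx).
  rewrite ln_mult by lra.
  assert (ln (1 + / x) <= / x).
  { rewrite <- (ln_exp (/ x)) at 2. apply ln_le; [lra | apply exp_ineq1_le]. }
  lra.
Qed.

Lemma ln_ratio_le_sum_inv m n : (m <= n)%nat ->
  ln (INR n + 1) - ln (INR m + 1)
  <= sum_to (fun i => / INR i) n - sum_to (fun i => / INR i) m.
Proof.
  induction 1 as [|n Hmn IH]; [lra|]. cbn [sum_to].
  pose proof (ln_succ_sub_ln_le_inv (INR n + 1) ltac:(pose proof (pos_INR n); lra)).
  rewrite S_INR. lra.
Qed.

Lemma Rpower_le_of_comparable x y k g : 1 <= k -> 0 < x -> 0 < y ->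
  x <= k * y -> y <= k * x -> Rpower x g <= Rpower k (Rabs g) * Rpower y g.
Proof.
  intros Hk Hx Hy Hxy Hyx. unfold Rpower. rewrite <- exp_plus.
  assert (ln x <= ln k + ln y) by (rewrite <- ln_mult by lra; apply ln_le; lra).
  assert (ln y <= ln k + ln x) by (rewrite <- ln_mult by lra; apply ln_le; lra).
  assert (Hd : Rabs (ln x - ln y) <= ln k) by (apply Rabs_le; lra).
  assert (g * (ln x - ln y) <= Rabs g * ln k).
  { eapply Rle_trans; [apply Rle_abs|]. rewrite Rabs_mult.
    apply Rmult_le_compat_l; [apply Rabs_pos | exact Hd]. }
  destruct (Rle_lt_or_eq_dec (g * ln x) (Rabs g * ln k + g * ln y)) as [Hlt|Heq];
    [lra | left; apply exp_increasing, Hlt | right; rewrite Heq; reflexivity].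
Qed.

Lemma inv_sqrt_sub_inv_sqrt_succ_ge x : 1 <= x ->
  / (6 * x * sqrt x) <= / sqrt x - / sqrt (x + 1).
Proof.
  intros Hx. set (u := sqrt x). set (v := sqrt (x + 1)).
  assert (Hu2 : u * u = x) by (apply sqrt_sqrt; lra).
  assert (Hv2 : v * v = x + 1) by (apply sqrt_sqrt; lra).
  assert (Hu : 0 < u) by (apply sqrt_lt_R0; lra).
  assert (Hv : 0 < v) by (apply sqrt_lt_R0; lra).
  assert (Hu1 : 1 <= u) by nra.
  assert (Huv : u <= v <= 2 * u) by nra.
  replace (/ u - / v) with ((v * v - u * u) / (u * v * (u + v))) by (field; lra).
  rewrite Hu2, Hv2, <- Hu2. unfold Rdiv.
  replace (u * u + 1 - u * u) with 1 by ring. rewrite Rmult_1_l.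
  apply Rinv_le_contravar; nra.
Qed.

Lemma nfloor_INR n : nfloor (INR n) = n.
Proof.
  unfold nfloor, Int_part. rewrite <- (up_tech (INR n) (Z.of_nat n)).
  - replace (Z.of_nat n + 1 - 1)%Z with (Z.of_nat n) by lia. apply Znat.Nat2Z.id.
  - rewrite INR_IZR_INZ; lra.
  - rewrite plus_IZR, <- INR_IZR_INZ; simpl; lra.
Qed.

Lemma nfloor_bounds X : 0 <= X -> INR (nfloor X) <= X < INR (nfloor X) + 1.
Proof.
  intros HX. destruct (base_Int_part X) as [H1 H2].
  assert (Hz : (0 <= Int_part X)%Z).
  { destruct (Z.le_gt_cases 0 (Int_part X)); auto.
    assert (IZR (Int_part X) <= -1) by (apply IZR_le; lia). lra. }
  unfold nfloor. rewrite INR_IZR_INZ, Znat.Z2Nat.id by exact Hz. lra.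
Qed.

Lemma count_upto_INR P n : count_upto P (INR n) = count_to P n.
Proof. unfold count_upto. rewrite nfloor_INR. reflexivity. Qed.

Lemma pair_count_nfloor A B X : pair_count A B X = pair_count A B (INR (nfloor X)).
Proof. unfold pair_count. rewrite nfloor_INR. reflexivity. Qed.

Lemma length_filter_list_prod {U V : Type} (P : U * V -> bool) l1 l2 :
  length (filter P (list_prod l1 l2)) =
  list_sum (map (fun x => length (filter (fun y => P (x, y)) l2)) l1).
Proof.
  induction l1 as [|x l IH]; simpl; [reflexivity|].
  rewrite filter_app, length_app, filter_map_swap, length_map, IH. reflexivity.
Qed.

Lemma count_to_div_le_pairs (B : nat -> bool) a N : (1 <= a)%nat ->
  (count_to B (N / a) <= length (filter (fun b => B b && Nat.leb (a * b) N)%bool (seq 1 N)))%nat.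
Proof.
  intros Ha. unfold count_to.
  assert (HNa : (N / a <= N)%nat) by (apply Nat.Div0.div_le_upper_bound; nia).
  replace (seq 1 N) with (seq 1 (N / a) ++ seq (1 + N / a) (N - N / a))
    by (rewrite <- seq_app; f_equal; lia).
  rewrite filter_app, length_app.
  rewrite (filter_ext_in (fun b => B b && Nat.leb (a * b) N)%bool B (seq 1 (N / a))); [lia|].
  intros b Hb. apply in_seq in Hb. destruct (B b); [|reflexivity]. simpl.
  apply Nat.leb_le. pose proof (Nat.Div0.mul_div_le N a). nia.
Qed.

Lemma pair_count_ge_sum (A B : nat -> bool) (N T : nat) : (T <= N)%nat ->
  sum_to (fun a => if A a then INR (count_to B (N / a)) else 0) T
  <= INR (pair_count A B (INR N)).
Proof.
  intros HTN. unfold pair_count. rewrite nfloor_INR, length_filter_list_prod, INR_list_sum_seq.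
  eapply Rle_trans; [|apply (sum_to_le_of_nonneg_tail _ T N HTN); intros; apply pos_INR].
  apply sum_to_le. intros a Ha. simpl. destruct (A a); simpl; [|apply pos_INR].
  apply le_INR, count_to_div_le_pairs. lia.
Qed.

Lemma ln_nat_sqrt_bounds n : (1 <= n)%nat ->
  2 * ln (INR (Nat.sqrt n)) <= ln (INR n) <= ln 4 + 2 * ln (INR (Nat.sqrt n)).
Proof.
  intros Hn. set (r := Nat.sqrt n).
  destruct (Nat.sqrt_spec n) as [Hlo Hhi]; [lia|]. fold r in Hlo, Hhi.
  assert (Hr : (1 <= r)%nat) by (apply Nat.sqrt_le_square; lia).
  apply le_INR in Hlo. apply lt_INR in Hhi. apply le_INR in Hr.
  rewrite mult_INR in Hlo, Hhi. rewrite S_INR in Hhi. simpl in Hr.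
  assert (Hlo' : ln (INR r * INR r) <= ln (INR n)) by (apply ln_le; nra).
  assert (Hhi' : ln (INR n) <= ln (4 * (INR r * INR r))) by (apply ln_le; nra).
  rewrite ln_mult in Hlo' by lra. rewrite !ln_mult in Hhi' by nra.
  lra.
Qed.

Lemma nat_gt_1_of_ln_pos n : 0 < ln (INR n) -> (1 < n)%nat.
Proof.
  intros H. destruct n as [|[|n]]; [| |lia]; simpl in H; rewrite ?ln_1 in H; [|lra].
  unfold ln in H. destruct (Rlt_dec 0 0); lra.
Qed.

Lemma nat_le_of_ln_le m n : (1 <= n)%nat -> ln (INR m) <= ln (INR n) -> (m <= n)%nat.
Proof.
  intros Hn H. destruct (Nat.le_gt_cases m n) as [|Hlt]; [assumption|].
  apply lt_INR in Hlt. apply le_INR in Hn. simpl in Hn.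
  pose proof (ln_increasing (INR n) (INR m) ltac:(lra) Hlt). lra.
Qed.

Section PairCountLowerBound.

Variables (A B : nat -> bool) (alpha beta C : R) (n0 : nat).
Hypothesis C_pos : 0 < C.
Hypothesis n0_pos : (1 <= n0)%nat.
Hypothesis count_A_ge : forall n, (n0 <= n)%nat ->
  C * sqrt (INR n) / Rpower (ln (INR n)) alpha <= INR (count_to A n).
Hypothesis count_B_ge : forall n, (n0 <= n)%nat ->
  C * sqrt (INR n) / Rpower (ln (INR n)) beta <= INR (count_to B n).

Variable N : nat.
Hypothesis ln_N_large : 8 * ln 4 + 16 * ln (INR n0) <= ln (INR N).
Let L := ln (INR N).

Let T := Nat.sqrt N.
Let s := Nat.sqrt T.

Let ln4_pos : 0 < ln 4.
Proof. rewrite <- ln_1. apply ln_increasing; lra. Qed.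

Let ln_n0_nonneg : 0 <= ln (INR n0).
Proof. rewrite <- ln_1. apply ln_le; [lra|]. apply (le_INR 1), n0_pos. Qed.

Let L_large : 8 * ln 4 + 16 * ln (INR n0) <= L.
Proof. exact ln_N_large. Qed.

Lemma T_bounds : (2 <= T)%nat /\ (T <= N)%nat /\ L / 4 <= ln (INR T) <= L.
Proof.
  assert (HN : (1 < N)%nat) by (apply nat_gt_1_of_ln_pos; fold L; lra).
  assert (HT1 : (1 <= T)%nat) by (apply Nat.sqrt_le_square; lia).
  assert (HTN : (T <= N)%nat) by apply Nat.sqrt_le_lin.
  assert (HlnT : L / 4 <= ln (INR T)).
  { pose proof (ln_nat_sqrt_bounds N ltac:(lia)) as HNT. fold L T in HNT. lra. }
  assert (HlnTL : ln (INR T) <= L).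
  { apply ln_le; [apply (lt_INR 0); lia | apply le_INR; exact HTN]. }
  repeat split; [apply nat_gt_1_of_ln_pos; lra | assumption | assumption | assumption].
Qed.

Lemma s_bounds : (n0 <= s)%nat /\ (s < T)%nat /\
  L / 16 <= ln (INR s) /\ L / 16 <= ln (INR T) - ln (INR s + 1).
Proof.
  destruct T_bounds as (HT2 & _ & HlnT & _).
  pose proof (ln_nat_sqrt_bounds T ltac:(lia)) as Hs. fold s in Hs.
  assert (Hs1 : (1 <= s)%nat) by (apply Nat.sqrt_le_square; lia).
  assert (Hsr : 1 <= INR s) by apply (le_INR 1), Hs1.
  assert (Hln4 : ln 4 = 2 * ln 2) by (replace 4 with (2 * 2) by ring; rewrite ln_mult; lra).
  assert (Hlns : L / 16 <= ln (INR s)) by lra.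
  assert (ln (INR s + 1) <= ln 2 + ln (INR s)) by (rewrite <- ln_mult; [apply ln_le|..]; lra).
  repeat split; [| apply Nat.sqrt_lt_lin; lia | lra | lra].
  apply nat_le_of_ln_le; [exact Hs1 | lra].
Qed.

Let H := C * sqrt (INR N) / (2 * (Rpower 4 (Rabs beta) * Rpower L beta)).
Let h (a : nat) := H / sqrt (INR a).
Let kappa := C * H / (6 * (Rpower 16 (Rabs alpha) * Rpower L alpha)).

Let H_nonneg : 0 <= H.
Proof.
  pose proof (sqrt_pos (INR N)). pose proof (Rpower_pos 4 (Rabs beta)).
  pose proof (Rpower_pos L beta). apply Rle_mult_inv_pos; nra.
Qed.

Lemma h_le_count_B a : (1 <= a <= T)%nat -> h a <= INR (count_to B (N / a)).
Proof.
  intros Ha. destruct T_bounds as (HT2 & HTN & HlnT & HlnTL).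
  destruct s_bounds as (Hn0s & HsT & _).
  set (Y := (N / a)%nat).
  assert (HTY : (T <= Y)%nat).
  { apply Nat.div_le_lower_bound; [lia|].
    pose proof (Nat.sqrt_spec N) as HNT. fold T in HNT. nia. }
  assert (HYN : (Y <= N)%nat) by (apply Nat.Div0.div_le_upper_bound; nia).
  assert (HNY : (N <= 2 * (a * Y))%nat).
  { pose proof (Nat.Div0.div_mod N a) as Hdm. pose proof (Nat.mod_upper_bound N a).
    fold Y in Hdm. nia. }
  pose proof (le_INR _ _ HTY). pose proof (le_INR _ _ HYN).
  pose proof (le_INR _ _ HNY) as HNYr. rewrite !mult_INR in HNYr. simpl (INR 2) in HNYr.
  assert (Ha1 : 1 <= INR a) by apply (le_INR 1), Ha.
  assert (HlnY : L / 4 <= ln (INR Y) <= L).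
  { assert (1 <= INR T) by (apply (le_INR 1); lia).
    split; [eapply Rle_trans; [exact HlnT|] |]; apply ln_le; lra. }
  set (P := Rpower 4 (Rabs beta) * Rpower L beta).
  assert (HQP : Rpower (ln (INR Y)) beta <= P) by (apply Rpower_le_of_comparable; lra).
  assert (HQ : 0 < Rpower (ln (INR Y)) beta) by apply Rpower_pos.
  assert (Hsa : 0 < sqrt (INR a)) by (apply sqrt_lt_R0; lra).
  assert (HsN : sqrt (INR N) <= 2 * sqrt (INR a) * sqrt (INR Y)).
  { rewrite <- (sqrt_square 2), <- !sqrt_mult by nra. apply sqrt_le_1; nra. }
  eapply Rle_trans; [|apply count_B_ge; lia].
  apply Rle_trans with (C * sqrt (INR Y) / P).
  - replace (C * sqrt (INR Y) / P)
      with (h a + C / (2 * P * sqrt (INR a)) * (2 * sqrt (INR a) * sqrt (INR Y) - sqrt (INR N)))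
      by (unfold h, H; fold P; field; lra).
    enough (0 <= C / (2 * P * sqrt (INR a))) by nra.
    apply Rle_mult_inv_pos; nra.
  - unfold Rdiv. apply Rmult_le_compat_l; [pose proof (sqrt_pos (INR Y)); nra|].
    apply Rinv_le_contravar; assumption.
Qed.

Lemma h_sub_h_succ_ge a : (1 <= a)%nat ->
  H / (6 * INR a * sqrt (INR a)) <= h a - h (S a).
Proof.
  intros Ha. unfold h. rewrite S_INR.
  replace (H / sqrt (INR a) - H / sqrt (INR a + 1))
    with (H * (/ sqrt (INR a) - / sqrt (INR a + 1))) by (unfold Rdiv; ring).
  apply Rmult_le_compat_l; [exact H_nonneg|].
  apply inv_sqrt_sub_inv_sqrt_succ_ge, (le_INR 1), Ha.
Qed.

Lemma h_antitone a : (1 <= a)%nat -> h (S a) <= h a.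
Proof.
  intros Ha. pose proof (h_sub_h_succ_ge a Ha).
  assert (Ha1 : 1 <= INR a) by apply (le_INR 1), Ha.
  assert (0 < sqrt (INR a)) by (apply sqrt_lt_R0; lra).
  enough (0 <= H / (6 * INR a * sqrt (INR a))) by lra.
  apply Rle_mult_inv_pos; [exact H_nonneg | nra].
Qed.

Lemma h_nonneg a : (1 <= a)%nat -> 0 <= h a.
Proof.
  intros Ha. apply Rle_mult_inv_pos; [exact H_nonneg|].
  apply sqrt_lt_R0. apply (lt_INR 0). lia.
Qed.

Lemma kappa_div_le_count_A a : (s < a <= T)%nat ->
  kappa / INR a <= INR (count_to A a) * (h a - h (S a)).
Proof.
  intros Ha. destruct T_bounds as (_ & _ & _ & HlnTL).
  destruct s_bounds as (Hn0s & _ & Hlns & _).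
  assert (Hs1 : 1 <= INR s) by (apply (le_INR 1); lia).
  assert (Hsa : INR s <= INR a <= INR T) by (split; apply le_INR; lia).
  assert (Hlna : L / 16 <= ln (INR a) <= L).
  { split; [eapply Rle_trans; [exact Hlns|] | eapply Rle_trans; [|exact HlnTL]];
      apply ln_le; lra. }
  set (P := Rpower 16 (Rabs alpha) * Rpower L alpha).
  assert (HQP : Rpower (ln (INR a)) alpha <= P) by (apply Rpower_le_of_comparable; lra).
  assert (HQ : 0 < Rpower (ln (INR a)) alpha) by apply Rpower_pos.
  assert (Hsqa : 0 < sqrt (INR a)) by (apply sqrt_lt_R0; lra).
  assert (Hc : C * sqrt (INR a) / P <= INR (count_to A a)).
  { eapply Rle_trans; [|apply count_A_ge; lia].
    unfold Rdiv. apply Rmult_le_compat_l; [nra|]. apply Rinv_le_contravar; assumption. }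
  pose proof (h_sub_h_succ_ge a ltac:(lia)) as Hh.
  apply Rle_trans with (C * sqrt (INR a) / P * (H / (6 * INR a * sqrt (INR a)))).
  - right. unfold kappa. fold P. field. nra.
  - pose proof H_nonneg. apply Rmult_le_compat; try assumption.
    + apply Rle_mult_inv_pos; nra.
    + apply Rle_mult_inv_pos; nra.
Qed.

Lemma pair_count_ge_kappa : kappa * (L / 16) <= INR (pair_count A B (INR N)).
Proof.
  destruct T_bounds as (HT2 & HTN & _).
  destruct s_bounds as (_ & HsT & _ & HlnTs).
  assert (Hkappa : 0 <= kappa).
  { pose proof H_nonneg. pose proof (Rpower_pos 16 (Rabs alpha)).
    pose proof (Rpower_pos L alpha). apply Rle_mult_inv_pos; nra. }
  set (m := pred T). assert (ET : T = S m) by lia.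
  pose proof (ln_ratio_le_sum_inv s m ltac:(lia)) as Hharm. rewrite <- S_INR, <- ET in Hharm.
  apply Rle_trans with (kappa * (ln (INR T) - ln (INR s + 1))).
  { apply Rmult_le_compat_l; assumption. }
  apply Rle_trans with (sum_to (fun i => kappa / INR i) m - sum_to (fun i => kappa / INR i) s).
  { unfold Rdiv. rewrite !sum_to_scal. nra. }
  eapply Rle_trans.
  { apply sum_to_range_le; [lia|]. intros a Ha. apply kappa_div_le_count_A. lia. }
  eapply Rle_trans.
  { apply sum_indicator_ge_tail; [lia | |].
    - exact h_antitone.
    - apply h_nonneg. lia. }
  rewrite <- ET.
  eapply Rle_trans; [|apply (pair_count_ge_sum A B N T HTN)].
  apply sum_to_le. intros a Ha. destruct (A a); [|lra].
  apply h_le_count_B. lia.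
Qed.

Lemma pair_count_ge_nat :
  C * C / (192 * (Rpower 16 (Rabs alpha) * Rpower 4 (Rabs beta)))
    * sqrt (INR N) * Rpower (ln (INR N)) (1 - alpha - beta)
  <= INR (pair_count A B (INR N)).
Proof.
  eapply Rle_trans; [|exact pair_count_ge_kappa]. right. fold L.
  assert (0 < L) by lra.
  replace (1 - alpha - beta) with (1 + (- alpha + - beta)) by ring.
  rewrite !Rpower_plus, !Rpower_Ropp, Rpower_1 by assumption.
  unfold kappa, H. field.
  repeat split; apply Rgt_not_eq, Rpower_pos.
Qed.

End PairCountLowerBound.

Lemma sqrt_Rpower_ln_le_nfloor X g : 2 <= X ->
  sqrt X * Rpower (ln X) g
  <= 2 * Rpower 2 (Rabs g) * (sqrt (INR (nfloor X)) * Rpower (ln (INR (nfloor X))) g).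
Proof.
  intros HX. destruct (nfloor_bounds X ltac:(lra)) as [HNX HXN].
  assert (HN : 2 <= INR (nfloor X)).
  { assert (Hlt : (1 < nfloor X)%nat) by (apply INR_lt; simpl; lra).
    apply (le_INR 2) in Hlt. simpl in Hlt. lra. }
  set (N := INR (nfloor X)) in *.
  assert (HlnN : 0 < ln N) by (rewrite <- ln_1; apply ln_increasing; lra).
  assert (HlnX : ln N <= ln X <= 2 * ln N).
  { split; [apply ln_le; lra|]. replace (2 * ln N) with (ln (N * N)) by (rewrite ln_mult; lra).
    apply ln_le; nra. }
  assert (HsX : sqrt X <= 2 * sqrt N).
  { rewrite <- (sqrt_square 2), <- sqrt_mult by lra. apply sqrt_le_1; lra. }
  assert (HP : Rpower (ln X) g <= Rpower 2 (Rabs g) * Rpower (ln N) g)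
    by (apply Rpower_le_of_comparable; lra).
  pose proof (Rpower_pos (ln X) g).
  replace (2 * Rpower 2 (Rabs g) * (sqrt N * Rpower (ln N) g))
    with ((2 * sqrt N) * (Rpower 2 (Rabs g) * Rpower (ln N) g)) by ring.
  apply Rmult_le_compat; [apply sqrt_pos | left; exact H | exact HsX | exact HP].
Qed.

Lemma count_to_ge_of_count_upto (P : nat -> bool) (f : R -> R) X0 :
  (forall X, X >= X0 -> INR (count_upto P X) >= f X) ->
  forall n, (S (nfloor (Rabs X0)) <= n)%nat -> f (INR n) <= INR (count_to P n).
Proof.
  intros HP n Hn. rewrite <- count_upto_INR. apply Rge_le, HP.
  apply le_INR in Hn. rewrite S_INR in Hn.
  destruct (nfloor_bounds (Rabs X0) (Rabs_pos X0)). pose proof (Rle_abs X0). lra.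
Qed.

Lemma pair_count_eventually_ge_of_nat (A B : nat -> bool) c g K : 0 < c ->
  (forall N : nat, K <= ln (INR N) ->
     c * sqrt (INR N) * Rpower (ln (INR N)) g <= INR (pair_count A B (INR N))) ->
  exists C', C' > 0 /\ exists X0, forall X, X >= X0 ->
    INR (pair_count A B X) >= C' * sqrt X * Rpower (ln X) g.
Proof.
  intros Hc Hnat. pose proof (Rpower_pos 2 (Rabs g)) as H2g.
  exists (c / (2 * Rpower 2 (Rabs g))). split; [apply Rlt_gt, Rdiv_lt_0_compat; lra|].
  exists (exp K + 2). intros X HX. apply Rle_ge. pose proof (exp_pos K).
  destruct (nfloor_bounds X ltac:(lra)) as [_ HXN].
  assert (HlnN : K <= ln (INR (nfloor X))).
  { rewrite <- (ln_exp K). apply ln_le; lra. }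
  rewrite pair_count_nfloor. eapply Rle_trans; [|exact (Hnat _ HlnN)].
  pose proof (sqrt_Rpower_ln_le_nfloor X g ltac:(lra)) as Hfloor.
  apply (Rmult_le_reg_l (2 * Rpower 2 (Rabs g))); [lra|].
  replace (2 * Rpower 2 (Rabs g) * (c / (2 * Rpower 2 (Rabs g)) * sqrt X * Rpower (ln X) g))
    with (c * (sqrt X * Rpower (ln X) g)) by (field; lra).
  replace (2 * Rpower 2 (Rabs g) * (c * sqrt (INR (nfloor X)) * Rpower (ln (INR (nfloor X))) g))
    with (c * (2 * Rpower 2 (Rabs g) * (sqrt (INR (nfloor X)) * Rpower (ln (INR (nfloor X))) g)))
    by ring.
  apply Rmult_le_compat_l; lra.
Qed.

Theorem lemma2p2 (alpha beta : R) (A B : nat -> bool) :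
  alpha < 1 -> beta < 1 ->
  (exists C : R, C > 0 /\ exists X0 : R, forall X : R, X >= X0 ->
      INR (count_upto A X) >= C * sqrt X / Rpower (ln X) alpha /\
      INR (count_upto B X) >= C * sqrt X / Rpower (ln X) beta) ->
  exists C' : R, C' > 0 /\ exists X0 : R, forall X : R, X >= X0 ->
      INR (pair_count A B X) >= C' * sqrt X * Rpower (ln X) (1 - alpha - beta).
Proof.
  intros _ _ [C [HC [X0 HX]]].
  set (n0 := S (nfloor (Rabs X0))).
  apply (pair_count_eventually_ge_of_nat A B
           (C * C / (192 * (Rpower 16 (Rabs alpha) * Rpower 4 (Rabs beta))))
           _ (8 * ln 4 + 16 * ln (INR n0))).
  - pose proof (Rpower_pos 16 (Rabs alpha)). pose proof (Rpower_pos 4 (Rabs beta)).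
    apply Rdiv_lt_0_compat; nra.
  - intros N HN. apply (pair_count_ge_nat A B alpha beta C n0); [exact HC | lia | | | exact HN].
    + apply (count_to_ge_of_count_upto A (fun X => C * sqrt X / Rpower (ln X) alpha) X0).
      intros X HX'. exact (proj1 (HX X HX')).
    + apply (count_to_ge_of_count_upto B (fun X => C * sqrt X / Rpower (ln X) beta) X0).
      intros X HX'. exact (proj2 (HX X HX')).
Qed.
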